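(* Let $M$ be a smooth manifold with a symmetric (torsion-free) affine connection $\nabla$ and Riemann tensor $R_{abc}{}^d$. Then for all indices $$\nabla_{(a}\nabla_bR_{cd)e}{}^f = R_{(abc}{}^m R_{d)me}{}^f - R_{ace}{}^m R_{bdm}{}^f + R_{acm}{}^f R_{bde}{}^m .$$
   Context: Abstract index notation with Einstein summation is used. The connection has Christoffel symbols $\Gamma^c_{ab}=\Gamma^c_{ba}$, and the Riemann tensor is $R_{abc}{}^d = \partial_a \Gamma_{bc}^d - \partial_b\Gamma_{ac}^d - \Gamma_{ac}^k\Gamma_{bk}^d + \Gamma_{ak}^d \Gamma_{bc}^k$. The notation $(abcd)$ on a group of indices denotes the sum over the four cyclic permutations of $(a,b,c,d)$: e.g. $\nabla_{(a}\nabla_bR_{cd)e}{}^f=\nabla_a\nabla_bR_{cde}{}^f+\nabla_b\nabla_cR_{dae}{}^f+\nabla_c\nabla_dR_{abe}{}^f+\nabla_d\nabla_aR_{bce}{}^f$ and $R_{(abc}{}^m R_{d)me}{}^f = R_{abc}{}^m R_{dme}{}^f+R_{bcd}{}^m R_{ame}{}^f+R_{cda}{}^m R_{bme}{}^f+R_{dab}{}^m R_{cme}{}^f$. *)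

(* Coordinate (local chart) formalization: the ring [R] plays
   the role of smooth functions on a coordinate chart of M, and [D i] is the
   coordinate derivation d/dx^i. *)
From HB Require Import structures.
From mathcomp Require Import all_boot all_order all_algebra.
Set Implicit Arguments. Unset Strict Implicit. Unset Printing Implicit Defensive.
Import Order.TTheory GRing.Theory Num.Theory.
Local Open Scope ring_scope.

Section Tensors.
Variables (R : comNzRingType) (n : nat).
Variable D : 'I_n -> R -> R.
(* G a b c = Gamma^c_{ab} *)
Variable G : 'I_n -> 'I_n -> 'I_n -> R.

(* A family of coordinate derivations: additive, Leibniz, pairwise commuting
   (coordinate vector fields commute). *)
Definition coord_derivations : Prop :=
  [/\ forall i x y, D i (x + y) = D i x + D i y,
      forall i x y, D i (x * y) = D i x * y + x * D i y
    & forall i j x, D i (D j x) = D j (D i x)].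

Definition symmetric_connection : Prop :=
  forall a b c, G a b c = G b a c.

Definition Riem (a b c d : 'I_n) : R :=
  D a (G b c d) - D b (G a c d)
  - \sum_(k < n) G a c k * G b k d + \sum_(k < n) G a k d * G b c k.

Definition nablaRiem (x a b c d : 'I_n) : R :=
  D x (Riem a b c d)
  - \sum_(k < n) G x a k * Riem k b c d
  - \sum_(k < n) G x b k * Riem a k c d
  - \sum_(k < n) G x c k * Riem a b k d
  + \sum_(k < n) G x k d * Riem a b c k.

Definition nabla2Riem (y x a b c d : 'I_n) : R :=
  D y (nablaRiem x a b c d)
  - \sum_(k < n) G y x k * nablaRiem k a b c d
  - \sum_(k < n) G y a k * nablaRiem x k b c d
  - \sum_(k < n) G y b k * nablaRiem x a k c d
  - \sum_(k < n) G y c k * nablaRiem x a b k d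
  + \sum_(k < n) G y k d * nablaRiem x a b c k.
End Tensors.

From mathcomp Require Import all_boot all_order all_algebra.
From mathcomp Require Import ring.
Import GRing.Theory.
Local Open Scope ring_scope.

(* Write W_yxab for nabla_y nabla_x R_abe^f.

   - The coordinate identities of curvature (antisymmetry, first and second
     Bianchi identities, the Ricci identity for the commutator of two
     covariant derivatives of an arbitrary (3,1)-tensor) are checked by a
     normalisation procedure: each side is put in the form
     c + \sum_k F k + \sum_k \sum_l H k l, and the three parts are compared
     with [ring] after expanding derivations and ordering the symmetric
     arguments of [G] and [D]; double sums may differ by a relabelling k <-> l,
     which is supplied as an explicit certificate.
   - The covariant derivative of a (4,1)-tensor is additive and commutes with
     relabelling lower indices, so W inherits the antisymmetry in (a,b) and the
     vanishing cyclic sum over (x,a,b) of nabla R.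
   - The cyclic sum of W is rewritten as three commutators W_yx.. - W_xy..
     plus two cyclic sums minus one antisymmetric pair; the Ricci identity
     turns the commutators into curvature terms, which reduce to the
     right-hand side by antisymmetry and the first Bianchi identity. *)

Section CurvatureIdentities.
Variables (R : comNzRingType) (n : nat) (D : 'I_n -> R -> R).
Variable G : 'I_n -> 'I_n -> 'I_n -> R.
Hypothesis hD : coord_derivations D.
Hypothesis hG : symmetric_connection G.

Local Notation I := 'I_n.

Lemma partialD i x y : D i (x + y) = D i x + D i y.
Proof. by case: hD. Qed.

Lemma partialM i x y : D i (x * y) = D i x * y + x * D i y.
Proof. by case: hD. Qed.

Lemma partialC i j x : D i (D j x) = D j (D i x).
Proof. by case: hD. Qed.

Lemma partial0 i : D i 0 = 0.
Proof. by apply: (addrI (D i 0)); rewrite -partialD !addr0. Qed.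

Lemma partialN i x : D i (- x) = - D i x.
Proof. by apply: (addrI (D i x)); rewrite -partialD !subrr partial0. Qed.

Lemma partial_sum i (F : I -> R) : D i (\sum_(k < n) F k) = \sum_(k < n) D i (F k).
Proof. exact: (big_morph (D i) (partialD i) (partial0 i)). Qed.

Definition nf1 (c : R) (F : I -> R) : R := c + \sum_(k < n) F k.

Definition nf2 (c : R) (F : I -> R) (H : I -> I -> R) : R :=
  c + \sum_(k < n) F k + \sum_(k < n) \sum_(l < n) H k l.

Lemma nf1_atom t : t = nf1 t (fun _ => 0).
Proof. by rewrite /nf1 big1 ?addr0. Qed.

Lemma nf1_sum F : \sum_(k < n) F k = nf1 0 F.
Proof. by rewrite /nf1 add0r. Qed.

Lemma nf1_add {x y cx cy Fx Fy} : x = nf1 cx Fx -> y = nf1 cy Fy ->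
  x + y = nf1 (cx + cy) (fun k => Fx k + Fy k).
Proof. move=> -> ->; rewrite /nf1 big_split /=; ring. Qed.

Lemma nf1_opp {x cx Fx} : x = nf1 cx Fx -> - x = nf1 (- cx) (fun k => - Fx k).
Proof. by move=> ->; rewrite /nf1 sumrN opprD. Qed.

Lemma nf1_mull y {x cx Fx} : x = nf1 cx Fx -> y * x = nf1 (y * cx) (fun k => y * Fx k).
Proof. by move=> ->; rewrite /nf1 mulrDr mulr_sumr. Qed.

Lemma nf1_mulr y {x cx Fx} : x = nf1 cx Fx -> x * y = nf1 (cx * y) (fun k => Fx k * y).
Proof. by move=> ->; rewrite /nf1 mulrDl mulr_suml. Qed.

Lemma nf1_partial i {x cx Fx} : x = nf1 cx Fx ->
  D i x = nf1 (D i cx) (fun k => D i (Fx k)).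
Proof. by move=> ->; rewrite /nf1 partialD (partial_sum i Fx). Qed.

Lemma nf2_atom t : t = nf2 t (fun _ => 0) (fun _ _ => 0).
Proof. by rewrite /nf2 !big1 ?addr0. Qed.

Lemma nf2_sum {F c H} : (forall k, F k = nf1 (c k) (H k)) ->
  \sum_(k < n) F k = nf2 0 c H.
Proof. by move=> eF; rewrite /nf2 (eq_bigr _ (fun k _ => eF k)) big_split add0r. Qed.

Lemma nf2_add {x y cx cy Fx Fy Hx Hy} : x = nf2 cx Fx Hx -> y = nf2 cy Fy Hy ->
  x + y = nf2 (cx + cy) (fun k => Fx k + Fy k) (fun k l => Hx k l + Hy k l).
Proof.
move=> -> ->; rewrite /nf2 big_split /=.
under [X in _ = _ + _ + X]eq_bigr do rewrite big_split.
rewrite big_split /=; ring.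
Qed.

Lemma nf2_opp {x cx Fx Hx} : x = nf2 cx Fx Hx ->
  - x = nf2 (- cx) (fun k => - Fx k) (fun k l => - Hx k l).
Proof.
move=> ->; rewrite /nf2 sumrN.
under [X in _ = _ + X]eq_bigr do rewrite sumrN.
by rewrite sumrN !opprD.
Qed.

Lemma nf2_mull y {x cx Fx Hx} : x = nf2 cx Fx Hx ->
  y * x = nf2 (y * cx) (fun k => y * Fx k) (fun k l => y * Hx k l).
Proof.
move=> ->; rewrite /nf2 !mulrDr !mulr_sumr.
by under [X in _ = _ + X]eq_bigr do rewrite -mulr_sumr.
Qed.

Lemma nf2_mulr y {x cx Fx Hx} : x = nf2 cx Fx Hx ->
  x * y = nf2 (cx * y) (fun k => Fx k * y) (fun k l => Hx k l * y).
Proof.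
move=> ->; rewrite /nf2 !mulrDl !mulr_suml.
by under [X in _ = _ + X]eq_bigr do rewrite -mulr_suml.
Qed.

Lemma nf2_partial i {x cx Fx Hx} : x = nf2 cx Fx Hx ->
  D i x = nf2 (D i cx) (fun k => D i (Fx k)) (fun k l => D i (Hx k l)).
Proof.
move=> ->; rewrite /nf2 !partialD (partial_sum i Fx).
rewrite (partial_sum i (fun k => \sum_(l < n) Hx k l)).
by congr (_ + _); apply: eq_bigr => k _; rewrite (partial_sum i (Hx k)).
Qed.

(* Comparison of normal forms: the double sums agree when their summands
   differ by [H k l - H l k], which sums to zero after relabelling. *)
Lemma nf2_eq (H : I -> I -> R) {x y cx cy Fx Fy Hx Hy} :
  x = nf2 cx Fx Hx -> y = nf2 cy Fy Hy ->
  cx = cy -> (forall k, Fx k = Fy k) ->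
  (forall k l, Hx k l + H l k = Hy k l + H k l) -> x = y.
Proof.
move=> -> -> -> eF eH; rewrite /nf2 (eq_bigr _ (fun k _ => eF k)).
congr (_ + _); apply: (addIr (\sum_(k < n) \sum_(l < n) H k l)).
rewrite [\sum_(k < n) \sum_(l < n) H k l in LHS]exchange_big -!big_split /=.
by apply: eq_bigr => k _; rewrite -!big_split; apply: eq_bigr => l _; exact: eH.
Qed.

(* Reification of an expression into [nf1] / [nf2] form; the proof term
   built is the equation [t = nf t]. *)
Ltac has_sum t :=
  lazymatch t with context [\sum_(k < n) _] => constr:(true) | _ => constr:(false) end.

Ltac reify1 t :=
  lazymatch has_sum t with
  | false => constr:(nf1_atom t)
  | true =>
    lazymatch t with
    | ?x + ?y => let px := reify1 x in let py := reify1 y in constr:(nf1_add px py)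
    | - ?x => let px := reify1 x in constr:(nf1_opp px)
    | ?x * ?y =>
      lazymatch has_sum x with
      | true => let px := reify1 x in constr:(nf1_mulr y px)
      | false => let py := reify1 y in constr:(nf1_mull x py)
      end
    | D ?i ?x => let px := reify1 x in constr:(nf1_partial i px)
    | \sum_(k < n) @?F k => constr:(nf1_sum F)
    end
  end.

Ltac reify2 t :=
  lazymatch has_sum t with
  | false => constr:(nf2_atom t)
  | true =>
    lazymatch t with
    | ?x + ?y => let px := reify2 x in let py := reify2 y in constr:(nf2_add px py)
    | - ?x => let px := reify2 x in constr:(nf2_opp px)
    | ?x * ?y =>
      lazymatch has_sum x with
      | true => let px := reify2 x in constr:(nf2_mulr y px)
      | false => let py := reify2 y in constr:(nf2_mull x py)
      end
    | D ?i ?x => let px := reify2 x in constr:(nf2_partial i px)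
    | \sum_(k < n) @?F k =>
      let pF := constr:(fun k : I =>
        ltac:(let body := eval cbv beta in (F k) in let p := reify1 body in exact p)) in
      constr:(nf2_sum pF)
    end
  end.

Ltac expand_partials := repeat progress rewrite ?partialD ?partialM ?partialN ?partial0.

Ltac sort_connection := repeat match goal with |- context [G ?x ?y ?z] =>
  tryif constr_eq x y then fail else
  match goal with |- context [G y x z] => rewrite (hG x y z) end end.

Ltac sort_partials := repeat match goal with |- context [D ?x (D ?y ?t)] =>
  tryif constr_eq x y then fail else
  match goal with |- context [D y (D x t)] => rewrite (partialC x y t) end end.

Ltac close_ring :=
  intros; cbv beta; expand_partials; sort_connection; sort_partials; ring.

Ltac nf_eq_with H :=
  lazymatch goal with |- ?L = ?R =>
    let pL := reify2 L in let pR := reify2 R in apply: (nf2_eq H pL pR)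
  end.

Ltac nf_eq := nf_eq_with (fun _ _ : I => 0 : R).

Lemma Riem_antisym a b c d : Riem D G a b c d = - Riem D G b a c d.
Proof. rewrite /Riem; nf_eq; close_ring. Qed.

Lemma Riem_bianchi1 a b c d :
  Riem D G a b c d + Riem D G b c a d + Riem D G c a b d = 0.
Proof. rewrite /Riem; nf_eq; close_ring. Qed.

Lemma Riem_swap23 a b c d : Riem D G a c b d = Riem D G a b c d + Riem D G b c a d.
Proof.
rewrite (Riem_antisym a c); apply/esym/eqP.
by rewrite -addr_eq0 Riem_bianchi1.
Qed.

Ltac sort_Riem := repeat match goal with |- context [Riem D G ?x ?y ?z ?w] =>
  tryif constr_eq x y then fail else
  match goal with |- context [Riem D G y x z w] => rewrite (Riem_antisym x y z w) end end.

(* Covariant derivative nabla_x T_abc^d of a (3,1)-tensor, and nabla_y U_xabc^d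
   of a (4,1)-tensor; [nablaRiem] and [nabla2Riem] are their instances. *)
Definition cov3 (T : I -> I -> I -> I -> R) (x a b c d : I) : R :=
  D x (T a b c d)
  - \sum_(k < n) G x a k * T k b c d
  - \sum_(k < n) G x b k * T a k c d
  - \sum_(k < n) G x c k * T a b k d
  + \sum_(k < n) G x k d * T a b c k.

Definition cov4 (U : I -> I -> I -> I -> I -> R) (y x a b c d : I) : R :=
  D y (U x a b c d)
  - \sum_(k < n) G y x k * U k a b c d
  - \sum_(k < n) G y a k * U x k b c d
  - \sum_(k < n) G y b k * U x a k c d
  - \sum_(k < n) G y c k * U x a b k d
  + \sum_(k < n) G y k d * U x a b c k.

Lemma cov3_Riem_antisym x a b c d :
  cov3 (Riem D G) x a b c d = - cov3 (Riem D G) x b a c d.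
Proof. rewrite /cov3 /Riem; nf_eq; close_ring. Qed.

Lemma Riem_bianchi2 x a b c d :
  cov3 (Riem D G) x a b c d + cov3 (Riem D G) a b x c d
  + cov3 (Riem D G) b x a c d = 0.
Proof.
rewrite /cov3 /Riem.
nf_eq_with (fun k l => G b l d * G x c k * G a k l - G b l d * G a c k * G x k l
  + G b c l * G x k d * G a l k - G b c l * G a k d * G x l k
  - G a c l * G x k d * G b l k - G a l d * G x c k * G b k l); close_ring.
Qed.

Lemma ricci_identity T a b c d e f :
  cov4 (cov3 T) a b c d e f - cov4 (cov3 T) b a c d e f =
  - \sum_(m < n) Riem D G a b c m * T m d e f
  - \sum_(m < n) Riem D G a b d m * T c m e f
  - \sum_(m < n) Riem D G a b e m * T c d m f
  + \sum_(m < n) Riem D G a b m f * T c d e m.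
Proof.
rewrite /cov4 /cov3 /Riem.
nf_eq_with (fun k l => G a c k * G b k l * T l d e f - G a k l * G b c k * T l d e f
  + G a d k * G b k l * T c l e f - G a k l * G b d k * T c l e f
  + G a e k * G b k l * T c d l f - G a k l * G b e k * T c d l f
  + G a k f * G b l k * T c d e l - G a l k * G b k f * T c d e l
  + G a c k * G b d l * T k l e f + G a c k * G b e l * T k d l f
  - G a c k * G b l f * T k d e l + G a e k * G b d l * T c l k f
  - G a k f * G b d l * T c l e k - G a d l * G b c k * T k l e f
  + G a d k * G b e l * T c k l f - G a k f * G b e l * T c d l k
  - G a e l * G b c k * T k d l f - G a d k * G b l f * T c k e l
  - G a e k * G b l f * T c d k l + G a l f * G b c k * T k d e l); close_ring.
Qed.

Lemma cov4D U V y x a b c d :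
  cov4 (fun x a b c d => U x a b c d + V x a b c d) y x a b c d
  = cov4 U y x a b c d + cov4 V y x a b c d.
Proof. rewrite /cov4; nf_eq; close_ring. Qed.

Lemma cov4_eq0 U y x a b c d :
  (forall x a b c d, U x a b c d = 0) -> cov4 U y x a b c d = 0.
Proof.
move=> U0; rewrite /cov4 U0 partial0 !big1 => [|*|*|*|*|*]; rewrite ?U0 ?mulr0 //.
by rewrite !subr0 addr0.
Qed.

Lemma cov4_swap U y x a b c d :
  cov4 U y x b a c d = cov4 (fun x a b c d => U x b a c d) y x a b c d.
Proof. rewrite /cov4; ring. Qed.

Lemma cov4_cycle U y x a b c d :
  cov4 U y a b x c d = cov4 (fun x a b c d => U a b x c d) y x a b c d.
Proof. rewrite /cov4; ring. Qed.

Lemma cov4_antisym U y x a b c d :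
  (forall x a b c d, U x a b c d = - U x b a c d) ->
  cov4 U y x a b c d = - cov4 U y x b a c d.
Proof.
move=> hU; apply/eqP; rewrite -addr_eq0 cov4_swap -cov4D; apply/eqP.
by apply: cov4_eq0 => x' a' b' c' d'; rewrite hU addNr.
Qed.

Lemma cov4_cyclic U y x a b c d :
  (forall x a b c d, U x a b c d + U a b x c d + U b x a c d = 0) ->
  cov4 U y x a b c d + cov4 U y a b x c d + cov4 U y b x a c d = 0.
Proof.
move=> hU; rewrite (cov4_cycle U y x a b) (cov4_cycle U y a b x).
rewrite (cov4_cycle (fun x a b c d => U a b x c d) y x a b) -!cov4D.
exact: cov4_eq0.
Qed.

Local Notation nabla2R := (cov4 (cov3 (Riem D G))).

Lemma cyclic_nabla2_Riem a b c d e f :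
  nabla2R a b c d e f + nabla2R b c d a e f + nabla2R c d a b e f + nabla2R d a b c e f
  = \sum_(m < n) (Riem D G a b c m * Riem D G d m e f
                  + Riem D G b c d m * Riem D G a m e f
                  + Riem D G c d a m * Riem D G b m e f
                  + Riem D G d a b m * Riem D G c m e f)
    - \sum_(m < n) Riem D G a c e m * Riem D G b d m f
    + \sum_(m < n) Riem D G a c m f * Riem D G b d e m.
Proof.
have anti y x a' b' : nabla2R y x a' b' e f = - nabla2R y x b' a' e f.
  exact/cov4_antisym/cov3_Riem_antisym.
have cyc y x a' b' : nabla2R y x a' b' e f + nabla2R y a' b' x e f + nabla2R y b' x a' e f = 0.
  exact/cov4_cyclic/Riem_bianchi2.
(* Three commutators, two cyclic sums and one antisymmetric pair. *)
have -> : nabla2R a b c d e f + nabla2R b c d a e f + nabla2R c d a b e f + nabla2R d a b c e f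
  = (nabla2R a c b d e f - nabla2R c a b d e f) - (nabla2R a d b c e f - nabla2R d a b c e f)
    + (nabla2R b c d a e f - nabla2R c b d a e f)
    + (nabla2R a b c d e f + nabla2R a c d b e f + nabla2R a d b c e f)
    + (nabla2R c a b d e f + nabla2R c b d a e f + nabla2R c d a b e f)
    - (nabla2R a c b d e f + nabla2R a c d b e f) by ring.
rewrite !ricci_identity (cyc a b c d) (cyc c a b d) (anti a c b d) addNr !addr0 subr0.
nf_eq; [close_ring | move=> m /= | close_ring].
rewrite (Riem_swap23 a c b m) (Riem_swap23 a c d m); sort_Riem; ring.
Qed.

End CurvatureIdentities.

Theorem mainTheorem1 (R : comNzRingType) (n : nat) (D : 'I_n -> R -> R)
    (G : 'I_n -> 'I_n -> 'I_n -> R)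
    (hD : coord_derivations D) (hG : symmetric_connection G)
    (a b c d e f : 'I_n) :
  nabla2Riem D G a b c d e f + nabla2Riem D G b c d a e f
  + nabla2Riem D G c d a b e f + nabla2Riem D G d a b c e f
  = \sum_(m < n) (Riem D G a b c m * Riem D G d m e f
                  + Riem D G b c d m * Riem D G a m e f
                  + Riem D G c d a m * Riem D G b m e f
                  + Riem D G d a b m * Riem D G c m e f)
    - \sum_(m < n) Riem D G a c e m * Riem D G b d m f
    + \sum_(m < n) Riem D G a c m f * Riem D G b d e m.
Proof. exact: (cyclic_nabla2_Riem _ _ _ _ hD hG). Qed.
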